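(* Let $G=(V,E)$ be a finite simple undirected graph, let $M$ be computed by a run of \textsc{MinGreedy} on $G$, and let $M^*$ be a maximum matching such that each component of $(V,M\cup M^* )$ with an edge is an edge of $M\cap M^*$ or an $M$-$M^*$-path. Let $w$ be an endpoint of an $M$-$M^*$-path $X$. Then $w$ is the target of at least one transfer, and $X$ (i.e. its two endpoints together) is the target of at least two transfers.
   Context: \textsc{MinGreedy}: starting with $M=\emptyset$, repeatedly select an arbitrary node $u$ of minimum non-zero current degree and an arbitrary neighbor $v$ of $u$, add $\{u,v\}$ to $M$ and remove all edges incident with $u$ or $v$ from the current graph. An $M$-$M^*$-path is a component of $(V,M\cup M^* )$ that is an alternating path starting and ending with an $M^*$-edge, with $m\geq1$ edges of $M$ and $m+1$ edges of $M^*$; its endpoints are its two $M$-uncovered end nodes. Let $F=E\setminus(M\cup M^* )$. For an endpoint $w$ of an $M$-$M^*$-path, an edge $\{v,w\}\in F$ is a transfer from $v$ to $w$ if, in the step of the algorithm in which $v$ is matched, the current degree of $w$ drops to at most $1$. *)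

From mathcomp Require Import all_boot.
Set Implicit Arguments. Unset Strict Implicit. Unset Printing Implicit Defensive.

Section MinGreedy.
Variables (T : finType) (e : rel T).

Definition edges : {set {set T}} := [set f : {set T} | [exists x, exists y, e x y && (f == [set x; y])]].

Definition is_matching (N : {set {set T}}) : bool :=
  (N \subset edges) &&
  [forall f in N, forall g in N, (f != g) ==> [disjoint f & g]].

Definition is_max_matching (N : {set {set T}}) : Prop :=
  is_matching N /\ forall N', is_matching N' -> #|N'| <= #|N|.

(* a run of MinGreedy is the sequence of selected pairs (u,v): u is the
   minimum-nonzero-degree node, v its chosen neighbour *)
Definition matched (p : seq (T * T)) : seq T :=
  [seq a.1 | a <- p] ++ [seq a.2 | a <- p].

(* adjacency in the current graph after the steps p *)
Definition cur (p : seq (T * T)) (x y : T) : bool :=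
  [&& e x y, x \notin matched p & y \notin matched p].

Definition cdeg (p : seq (T * T)) (x : T) : nat := #|[set y | cur p x y]|.

Definition mingreedy_run (s : seq (T * T)) : Prop :=
  (forall p u v r, s = p ++ (u, v) :: r ->
     [/\ cur p u v, 0 < cdeg p u &
         forall x, 0 < cdeg p x -> cdeg p u <= cdeg p x]) /\
  (forall x y, ~~ cur s x y).

Definition matching_of (s : seq (T * T)) : {set {set T}} :=
  [set [set a.1; a.2] | a in s].

Definition covered (N : {set {set T}}) (x : T) : bool := [exists f in N, x \in f].

(* M-Mstar-path with vertex sequence x :: q (its endpoints are x and last x q):
   distinct vertices, first/odd-position edges in Mstar, the others in M,
   m >= 1 edges of M, and both endpoints M-uncovered (so that it is a
   whole component of (V, M \cup Mstar)). *)
Definition mmpath (M Ms : {set {set T}}) (x : T) (q : seq T) : bool :=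
  [&& uniq (x :: q), 3 <= size q, odd (size q),
      all (fun i => let f := [set nth x (x :: q) i; nth x q i] in
                    if odd i then f \in M else f \in Ms) (iota 0 (size q)),
      ~~ covered M x & ~~ covered M (last x q)].

(* {v,w} is a transfer from v to w : {v,w} \in F = E \ (M \cup Mstar) and, in the
   step in which v is matched, the current degree of w becomes <= 1. *)
Definition transfer (s : seq (T * T)) (Ms : {set {set T}}) (v w : T) : bool :=
  ([set v; w] \in edges :\: (matching_of s :|: Ms)) &&
  [exists i : 'I_(size s),
     let uv := nth (v, v) s i in
     ((v == uv.1) || (v == uv.2)) && (cdeg (take i.+1 s) w <= 1)].

Definition ntransfers (s : seq (T * T)) (Ms : {set {set T}}) (w : T) : nat :=
  #|[set v | transfer s Ms v w]|.

End MinGreedy.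

From mathcomp Require Import all_boot zify.
Set Implicit Arguments. Unset Strict Implicit. Unset Printing Implicit Defensive.

(* Let P_0 ... P_n (n = 2m + 1) be the path, with P_0 unmatched.  If P_1 were
   the only neighbour of P_0, then P_0 keeps current degree 1 as long as P_1 is
   free, so whenever MinGreedy selects an M-edge {P_(2i+1), P_(2i+2)} of the
   path, its minimum-degree node has degree 1.  It cannot be P_(2i+1) (both of
   its path neighbours are still free), so it is P_(2i+2), and P_(2i+3) must
   already be matched: the M-edges of the path are thus selected in reverse
   order, and P_n ends up matched, which is absurd.  Hence P_0 has a neighbour
   y <> P_1; at the step in which the last such neighbour gets matched, the
   current degree of P_0 drops to at most 1, and {y, P_0} is a transfer. *)

Lemma exists_crossing (Q : pred nat) N :
  ~~ Q 0 -> Q N -> exists k, [/\ k < N, ~~ Q k & Q k.+1].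
Proof.
elim: N => [Q0 Q0'|N IH Q0 QN]; first by rewrite Q0' in Q0.
case QN': (Q N); last by exists N; rewrite QN'.
by have [k [kN nQk Qk1]] := IH Q0 QN'; exists k; split; [apply: ltnW|..].
Qed.

Section Graph.
Variables (T : finType) (e : rel T).

Definition incident (y : T) (a : T * T) := (y == a.1) || (y == a.2).

Lemma mem_matched p y : (y \in matched p) = has (incident y) p.
Proof.
rewrite /matched mem_cat; apply/idP/hasP.
  by case/orP=> /mapP[a Ha ->]; exists a; rewrite // /incident eqxx ?orbT.
case=> a Ha /orP[]/eqP->.
  by rewrite (map_f (fun a => a.1)).
by rewrite (map_f (fun a => a.2)) ?orbT.
Qed.

Lemma matched_take_leq (s : seq (T * T)) k k' y :
  k <= k' -> y \in matched (take k s) -> y \in matched (take k' s).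
Proof. by move=> le; rewrite !mem_matched -(subnKC le) takeD has_cat => ->. Qed.

Lemma matched_take (s : seq (T * T)) k y :
  y \in matched (take k s) -> y \in matched s.
Proof. by rewrite !mem_matched -{2}(cat_take_drop k s) has_cat => ->. Qed.

Lemma matched_take_succ (s : seq (T * T)) k y d : k < size s ->
  (y \in matched (take k.+1 s)) = (y \in matched (take k s)) || incident y (nth d s k).
Proof. by move=> ks; rewrite !mem_matched (take_nth d ks) has_rcons orbC. Qed.

Lemma covered_matching_of (s : seq (T * T)) y :
  covered (matching_of s) y = (y \in matched s).
Proof.
rewrite mem_matched; apply/existsP/hasP.
  by case=> f /andP[/imsetP[a Ha ->]]; rewrite !inE => Hy; exists a.
case=> a Ha Hy; exists [set a.1; a.2]; rewrite !inE; apply/andP.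
by split; [exact: (imset_f (fun a : T * T => [set a.1; a.2])) | exact: Hy].
Qed.

Lemma cur_set2_unmatched p u v a b : [set u; v] = [set a; b] -> cur e p u v ->
  a \notin matched p /\ b \notin matched p.
Proof.
move=> Euv /and3P[_ Hu Hv].
have : a \in [set u; v] by rewrite Euv set21.
have : b \in [set u; v] by rewrite Euv set22.
by do 2![case/set2P=> ->].
Qed.

Lemma cdeg_le1 p x z : (forall y, cur e p x y -> y = z) -> cdeg e p x <= 1.
Proof.
move=> only_z; rewrite -(cards1 z); apply: subset_leq_card.
by apply/subsetP=> y; rewrite !inE => /only_z ->.
Qed.

Lemma cdeg_gt1 p x y z : y != z -> cur e p x y -> cur e p x z -> 1 < cdeg e p x.
Proof.
move=> yz Hy Hz; apply: (@leq_trans #|[set y; z]|); first by rewrite cards2 yz.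
apply: subset_leq_card.
by apply/subsetP=> t; rewrite !inE => /orP[]/eqP->.
Qed.

Hypotheses (e_sym : symmetric e) (e_irr : irreflexive e).

Lemma cur_sym p x y : cur e p x y = cur e p y x.
Proof. by rewrite /cur e_sym; congr (_ && _); apply: andbC. Qed.

Lemma edges_rel a b : [set a; b] \in edges e -> e a b.
Proof.
rewrite inE => /existsP[x /existsP[y /andP[exy /eqP Eab]]].
have xy : x != y by apply: contraTneq exy => ->; rewrite e_irr.
have : #|[set a; b]| = 2 by rewrite Eab cards2 xy.
rewrite cards2; case: eqVneq => // ab _; move: ab.
have : a \in [set x; y] by rewrite -Eab set21.
have : b \in [set x; y] by rewrite -Eab set22.
by do 2![case/set2P=> ->]; rewrite ?eqxx // e_sym.
Qed.

Lemma matching_partner_uniq (N : {set {set T}}) x y z : is_matching e N ->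
  [set x; y] \in N -> [set x; z] \in N -> y != x -> y = z.
Proof.
case/andP=> _ /forallP disjN Nxy Nxz yx.
move: (disjN [set x; y]); rewrite Nxy implyTb => /forallP/(_ [set x; z]).
rewrite Nxz implyTb; case: eqVneq => [Exyz _ | _ /= dis].
  have : y \in [set x; z] by rewrite -Exyz set22.
  by case/set2P => // /eqP; rewrite (negbTE yx).
by move: (disjointFr dis (set21 x y)); rewrite set21.
Qed.

Section Run.
Variables (s : seq (T * T)) (Hrun : mingreedy_run e s).

(* A run never selects the same pair twice, so [index a s] is the step selecting [a]. *)
Definition state_before (a : T * T) := take (index a s) s.

Lemma mingreedy_step a : a \in s ->
  let p := state_before a in
  [/\ cur e p a.1 a.2, 0 < cdeg e p a.1 &
      forall x, 0 < cdeg e p x -> cdeg e p a.1 <= cdeg e p x].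
Proof.
move=> sa; apply: (Hrun.1 _ _ _ (drop (index a s).+1 s)).
rewrite -surjective_pairing; have := cat_take_drop (index a s) s.
by rewrite (drop_nth a) ?index_mem // nth_index // => ->.
Qed.

Lemma matched_before_mono a b y : index a s <= index b s ->
  y \in matched (state_before a) -> y \in matched (state_before b).
Proof. exact: matched_take_leq. Qed.

Lemma matching_of_run_sub : matching_of s \subset edges e.
Proof.
apply/subsetP=> _ /imsetP[a sa ->].
have [/and3P[ea _ _] _ _] := mingreedy_step sa.
by rewrite inE; apply/existsP; exists a.1; apply/existsP; exists a.2; rewrite ea eqxx.
Qed.

Section AlternatingPath.
Variables (Ms : {set {set T}}) (HMs : is_matching e Ms) (P : nat -> T) (m : nat).
Let n := m.*2.+1.
Hypotheses (m_gt0 : 0 < m) (P_inj : forall i j, i <= n -> j <= n -> P i = P j -> i = j).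
Hypothesis P_edge : forall i, i < n ->
  if odd i then [set P i; P i.+1] \in matching_of s else [set P i; P i.+1] \in Ms.
Hypotheses (P0_free : P 0 \notin matched s) (Pn_free : P n \notin matched s).

Lemma path_rel i : i < n -> e (P i) (P i.+1).
Proof.
move=> ilt; apply: edges_rel; have := P_edge ilt; case: (odd i) => Hi.
  exact: (subsetP matching_of_run_sub).
exact: (subsetP (andP HMs).1).
Qed.

Lemma path_cur p i : i < n -> P i \notin matched p -> P i.+1 \notin matched p ->
  cur e p (P i) (P i.+1).
Proof. by move=> ilt Hi Hi1; rewrite /cur path_rel ?Hi. Qed.

Lemma path_neq i j : i <= n -> j <= n -> i != j -> P i != P j.
Proof. by move=> ilt jlt; apply: contra => /eqP/(P_inj ilt jlt)->. Qed.

Lemma path_M_edge i : i < m ->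
  exists2 a, a \in s & [set a.1; a.2] = [set P i.*2.+1; P i.*2.+2].
Proof.
move=> im; have /P_edge : i.*2.+1 < n by rewrite /n; lia.
by rewrite /= odd_double => /imsetP[a sa ->]; exists a.
Qed.

Section OnlyNeighbour.
Hypothesis only_P1 : forall y, e (P 0) y -> y = P 1.

Lemma next_matched_before i a : i < m -> a \in s ->
  [set a.1; a.2] = [set P i.*2.+1; P i.*2.+2] ->
  P i.*2 \notin matched (state_before a) -> P 1 \notin matched (state_before a) ->
  P i.*2.+3 \in matched (state_before a).
Proof.
move=> im sa Ea Hi H1; have [cura _ min_a] := mingreedy_step sa.
move: cura min_a; set p := state_before a => cura min_a.
have [Hi1 Hi2] := cur_set2_unmatched Ea cura.
have deg_a : cdeg e p a.1 <= 1.
  apply: leq_trans (min_a (P 0) _) (cdeg_le1 (z := P 1) _).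
    apply/card_gt0P; exists (P 1); rewrite inE path_cur //.
    by apply: contra P0_free; apply: matched_take.
  by move=> y /and3P[/only_P1].
have : a.1 \in [set P i.*2.+1; P i.*2.+2] by rewrite -Ea set21.
case/set2P=> Ea1; [|apply: contraT => Hi3]; move: deg_a; rewrite leqNgt => /negP[].
  apply: (@cdeg_gt1 _ _ (P i.*2) (P i.*2.+2)); first by apply: path_neq; rewrite /n; lia.
    by rewrite Ea1 cur_sym path_cur //; rewrite /n; lia.
  by rewrite Ea1 path_cur //; rewrite /n; lia.
apply: (@cdeg_gt1 _ _ (P i.*2.+1) (P i.*2.+3)).
- by apply: path_neq; rewrite /n; lia.
- by rewrite Ea1 cur_sym path_cur //; rewrite /n; lia.
- by rewrite Ea1 path_cur //; rewrite /n; lia.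
Qed.

Lemma path_M_edges_reversed i : i < m -> exists2 a, a \in s &
  [/\ [set a.1; a.2] = [set P i.*2.+1; P i.*2.+2],
      P i.*2 \notin matched (state_before a) & P 1 \notin matched (state_before a)].
Proof.
elim: i => [|i IH] im.
  have [a sa Ea] := path_M_edge im; exists a => //; split => //.
    by apply: contra P0_free; apply: matched_take.
  by have [cura _ _] := mingreedy_step sa; case: (cur_set2_unmatched Ea cura).
have [a sa [Ea Hi H1]] := IH (ltnW im).
have Hi3 := next_matched_before (ltnW im) sa Ea Hi H1.
have [b sb Eb] := path_M_edge im; exists b => //.
have [curb _ _] := mingreedy_step sb.
rewrite doubleS in Eb *; have [Hb1 _] := cur_set2_unmatched Eb curb.
have ba : index b s <= index a s.
  rewrite leqNgt; apply: contraNN Hb1 => /ltnW ab.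
  exact: matched_before_mono Hi3.
have [cura _ _] := mingreedy_step sa; have [_ Ha2] := cur_set2_unmatched Ea cura.
by split=> //; [move: Ha2 | move: H1]; apply: contraNN; apply: matched_before_mono.
Qed.

End OnlyNeighbour.

Lemma exists_other_neighbour : exists y, e (P 0) y && (y != P 1).
Proof.
apply/existsP; apply: contraT; rewrite negb_exists => /forallP no_other.
have only_P1 y : e (P 0) y -> y = P 1.
  by move=> ey; apply/eqP; move: (no_other y); rewrite ey negbK.
have lastm : m.-1 < m by lia.
have [a sa [Ea Hi H1]] := path_M_edges_reversed only_P1 lastm.
move: (next_matched_before only_P1 lastm sa Ea Hi H1) => /matched_take.
by rewrite (_ : (m.-1).*2.+3 = n) ?(negbTE Pn_free) //; rewrite /n; lia.
Qed.

Lemma other_neighbour_free y : e (P 0) y -> y != P 1 ->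
  [set y; P 0] \in edges e :\: (matching_of s :|: Ms).
Proof.
move=> ey yP1; rewrite !inE negb_or -andbA; apply/and3P; split.
- apply: contra P0_free => My; rewrite -covered_matching_of.
  by apply/existsP; exists [set y; P 0]; rewrite My set22.
- apply: contra yP1; rewrite setUC => Msy; have Ms01 := P_edge (i := 0) isT.
  by rewrite (matching_partner_uniq HMs Ms01 Msy) // eq_sym path_neq.
- by apply/existsP; exists y; apply/existsP; exists (P 0); rewrite e_sym ey eqxx.
Qed.

Lemma endpoint_transfer : 0 < ntransfers e s Ms (P 0).
Proof.
have [y0 /andP[ey0 y0P1]] := exists_other_neighbour.
pose Q k := [forall y, e (P 0) y && (y != P 1) ==> (y \in matched (take k s))].
have nQ0 : ~~ Q 0 by apply/forallP=> /(_ y0); rewrite ey0 y0P1 take0.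
have Qs : Q (size s).
  apply/forallP=> y; apply/implyP=> /andP[ey _]; rewrite take_size.
  by have := Hrun.2 (P 0) y; rewrite /cur ey P0_free negbK.
have [k [ks /forallPn[y]]] := exists_crossing nQ0 Qs.
rewrite negb_imply => /andP[/andP[ey yP1] Hy] /forallP Qk1.
apply/card_gt0P; exists y; rewrite inE /transfer other_neighbour_free //=.
apply/existsP; exists (Ordinal ks); apply/andP; split.
  by move: (implyP (Qk1 y)); rewrite ey yP1 (matched_take_succ _ (y, y) ks) (negbTE Hy); apply.
apply: (@cdeg_le1 _ _ (P 1)) => z /and3P[ez _ Hz]; apply/eqP; apply: contraTT Hz => zP1.
by rewrite negbK; apply: (implyP (Qk1 z)); rewrite ez zP1.
Qed.

End AlternatingPath.

Lemma mmpath_endpoint_transfers Ms x q : is_matching e Ms ->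
  mmpath (matching_of s) Ms x q ->
  0 < ntransfers e s Ms x /\ 0 < ntransfers e s Ms (last x q).
Proof.
move=> HMs /and5P[un q3 oddq Hall /andP[]].
rewrite !covered_matching_of (last_nth x) => Px Plast.
set P := nth x (x :: q); have nq : size q = (size q)./2.*2.+1.
  by rewrite -[LHS]odd_double_half oddq add1n.
have m_gt0 : 0 < (size q)./2 by lia.
have P_inj i j : i <= size q -> j <= size q -> P i = P j -> i = j.
  by move=> ilt jlt /eqP; rewrite nth_uniq //= ?ltnS // => /eqP.
have P_edge i : i < size q -> if odd i then [set P i; P i.+1] \in matching_of s
                                        else [set P i; P i.+1] \in Ms.
  by move=> ilt; have := allP Hall i; rewrite mem_iota /= => /(_ ilt).
split.
  by have := @endpoint_transfer _ HMs P _ m_gt0; rewrite -nq; apply.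
(* The other endpoint is the first vertex of the reversed path. *)
have := @endpoint_transfer _ HMs (fun i => P (size q - i)) _ m_gt0.
rewrite -nq subn0 subnn; apply=> //.
- by move=> i j ilt jlt /P_inj; lia.
- move=> i ilt; have /P_edge : size q - i.+1 < size q by lia.
  rewrite (_ : (size q - i.+1).+1 = size q - i); last by lia.
  by rewrite oddB // nq /= odd_double /= negbK setUC.
Qed.

End Run.
End Graph.

Theorem lemma5 (T : finType) (e : rel T)
  (e_sym : symmetric e) (e_irr : irreflexive e)
  (s : seq (T * T)) (Hrun : mingreedy_run e s)
  (Ms : {set {set T}}) (HMs : is_max_matching e Ms)
  (Hcomp : forall y, covered (matching_of s :|: Ms) y ->
     [exists f in matching_of s :&: Ms, y \in f] \/
     exists x q, mmpath (matching_of s) Ms x q /\ y \in x :: q)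
  (x : T) (q : seq T) (HX : mmpath (matching_of s) Ms x q) :
  (forall w, (w = x \/ w = last x q) -> 1 <= ntransfers e s Ms w) /\
  2 <= ntransfers e s Ms x + ntransfers e s Ms (last x q).
Proof.
have [tx tlast] := mmpath_endpoint_transfers e_sym e_irr Hrun HMs.1 HX.
by split=> [w [->|->]|] //; rewrite -(addn1 1) leq_add.
Qed.
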